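(* Let $0<a<1$ and let $\tau_1,\tau_2:[0,a]\to[0,1]$ be continuously differentiable, strictly increasing maps with $\tau_i(0)=0$, $\tau_i(a)=1$, $\tau_1(x)\le x/a$ and $\tau_2(x)\ge x/a$, such that $\tau_{21}=\tau_2^{-1}\circ\tau_1:[0,a]\to[0,a]$ is continuously differentiable and satisfies $\tau_{21}(x)<x$ for $x\in(0,a)$. Let $0<\widehat a<a$ and $\sigma<1$ be such that $\tau_{21}'(x)\le\sigma$ for $x\in[0,\widehat a]$. Then the functional equation $$p(x)=p(\tau_{21}(x))\,\tau_{21}'(x)-\left[\tau_{21}'(x)-a\,\tau_1'(x)\right],\qquad x\in[0,\widehat a],$$ has exactly one solution $p\in L^\infty[0,\widehat a]$ (bounded functions on $[0,\widehat a]$). *)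

From Stdlib Require Export Reals Lra.
Open Scope R_scope.

Definition Icc (a b x : R) : Prop := a <= x <= b.

Definition continuous_within (D : R -> Prop) (f : R -> R) (x : R) : Prop :=
  forall eps, 0 < eps -> exists delta, 0 < delta /\
    forall y, D y -> Rabs (y - x) < delta -> Rabs (f y - f x) < eps.

(* l is the derivative of f at x relative to the set D
   (one-sided at the endpoints of an interval). *)
Definition has_derivative_within (D : R -> Prop) (f : R -> R) (x l : R) : Prop :=
  forall eps, 0 < eps -> exists delta, 0 < delta /\
    forall y, D y -> y <> x -> Rabs (y - x) < delta ->
      Rabs ((f y - f x) / (y - x) - l) < eps.

Definition C1_on (a b : R) (f f' : R -> R) : Prop :=
  (forall x, Icc a b x -> has_derivative_within (Icc a b) f x (f' x)) /\
  (forall x, Icc a b x -> continuous_within (Icc a b) f' x).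

Definition strict_incr_on (a b : R) (f : R -> R) : Prop :=
  forall x y, Icc a b x -> Icc a b y -> x < y -> f x < f y.

Definition bounded_on (a b : R) (f : R -> R) : Prop :=
  exists M, forall x, Icc a b x -> Rabs (f x) <= M.

(* tau21 is increasing (hence tau21' >= 0) and pulls [0, ahat] into itself, so
   with g := tau21' - a tau1' the equation reads p = (p o tau21) tau21' - g, an
   affine equation whose linear part multiplies sup norms by at most sigma < 1.
   Its unique bounded solution is the Neumann series
   p(x) = - sum_n g(tau21^n x) tau21'(x) tau21'(tau21 x) ... tau21'(tau21^(n-1) x),
   and the difference of two bounded solutions is bounded by M sigma^n for every n. *)
From Stdlib Require Import Reals Lra.
From Coquelicot Require Import Coquelicot.
Open Scope R_scope.

Lemma strict_incr_on_le lo hi f x y : strict_incr_on lo hi f ->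
  Icc lo hi x -> Icc lo hi y -> x <= y -> f x <= f y.
Proof.
  intros Hf Hx Hy Hxy.
  destruct (Rle_lt_or_eq_dec _ _ Hxy) as [Hlt | <-]; [left; apply Hf | right]; auto.
Qed.

Lemma strict_incr_on_inj lo hi f x y : strict_incr_on lo hi f ->
  Icc lo hi x -> Icc lo hi y -> f x = f y -> x = y.
Proof.
  intros Hf Hx Hy Hfxy.
  destruct (Rtotal_order x y) as [Hlt | [Heq | Hgt]]; auto.
  - specialize (Hf x y Hx Hy Hlt); lra.
  - specialize (Hf y x Hy Hx Hgt); lra.
Qed.

Lemma strict_incr_on_of_comp lo hi f1 f2 s :
  strict_incr_on lo hi f1 -> strict_incr_on lo hi f2 ->
  (forall x, Icc lo hi x -> Icc lo hi (s x) /\ f2 (s x) = f1 x) ->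
  strict_incr_on lo hi s.
Proof.
  intros Hf1 Hf2 Hs x y Hx Hy Hxy.
  destruct (Hs x Hx) as [Hsx Ex], (Hs y Hy) as [Hsy Ey].
  destruct (Rlt_or_le (s x) (s y)) as [Hlt | Hge]; [exact Hlt |].
  pose proof (strict_incr_on_le _ _ _ _ _ Hf2 Hsy Hsx Hge).
  pose proof (Hf1 x y Hx Hy Hxy); lra.
Qed.

Lemma Icc_exists_near lo hi x delta : lo < hi -> Icc lo hi x -> 0 < delta ->
  exists y, Icc lo hi y /\ y <> x /\ Rabs (y - x) < delta.
Proof.
  intros Hlohi [Hlox Hxhi] Hdelta.
  set (h := Rmin (delta / 2) (hi - lo)).
  assert (Hh : 0 < h <= delta / 2 /\ h <= hi - lo).
  { unfold h; split; [split; [apply Rmin_pos; lra | apply Rmin_l] | apply Rmin_r]. }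
  destruct (Rlt_dec x hi) as [Hxh | Hxh].
  - exists (Rmin (x + h) hi).
    pose proof (Rmin_l (x + h) hi); pose proof (Rmin_r (x + h) hi).
    assert (x < Rmin (x + h) hi) by (apply Rmin_glb_lt; lra).
    rewrite Rabs_pos_eq by lra; unfold Icc; repeat split; lra.
  - exists (x - h); rewrite Rabs_left by lra; unfold Icc; repeat split; lra.
Qed.

Lemma has_derivative_within_strict_incr_ge0 lo hi f l x : lo < hi ->
  strict_incr_on lo hi f -> Icc lo hi x ->
  has_derivative_within (Icc lo hi) f x l -> 0 <= l.
Proof.
  intros Hlohi Hf Hx Hd.
  destruct (Rle_lt_dec 0 l) as [Hl | Hl]; [exact Hl | exfalso].
  destruct (Hd (- l)) as [delta [Hdelta Hclose]]; [lra |].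
  destruct (Icc_exists_near lo hi x delta) as [y [Hy [Hyx Hyd]]]; auto.
  assert (Hq : 0 < (f y - f x) / (y - x)).
  { destruct (Rtotal_order x y) as [Hxy | [Exy | Hxy]]; [| contradiction (Hyx (eq_sym Exy)) |].
    - pose proof (Hf x y Hx Hy Hxy); apply Rdiv_lt_0_compat; lra.
    - pose proof (Hf y x Hy Hx Hxy).
      replace ((f y - f x) / (y - x)) with ((f x - f y) / (x - y)) by (field; lra).
      apply Rdiv_lt_0_compat; lra. }
  specialize (Hclose y Hy Hyx Hyd).
  revert Hclose; unfold Rabs; destruct Rcase_abs; lra.
Qed.


Lemma below_diagonal_maps_Icc a b s : 0 < b < a -> s 0 = 0 ->
  (forall x, Icc 0 a x -> Icc 0 a (s x)) -> (forall x, 0 < x < a -> s x < x) ->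
  forall x, Icc 0 b x -> Icc 0 b (s x).
Proof.
  intros Hab Hs0 Hs Hlt x [Hx0 Hxb].
  destruct (Rle_lt_or_eq_dec _ _ Hx0) as [Hpos | <-].
  - pose proof (Hlt x ltac:(lra)); destruct (Hs x ltac:(unfold Icc; lra)).
    unfold Icc; lra.
  - rewrite Hs0; unfold Icc; lra.
Qed.

(* [continuity_ab_maj] needs continuity on all of R: composing with [clamp]
   extends a function on [lo, hi] by constants. *)
Definition clamp (lo hi x : R) : R := Rmax lo (Rmin hi x).

Lemma clamp_Icc lo hi x : lo <= hi -> Icc lo hi (clamp lo hi x).
Proof. intros; unfold clamp, Icc, Rmax, Rmin; repeat destruct Rle_dec; lra. Qed.

Lemma clamp_id lo hi x : Icc lo hi x -> clamp lo hi x = x.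
Proof. unfold Icc, clamp, Rmax, Rmin; intros; repeat destruct Rle_dec; lra. Qed.

Lemma clamp_dist lo hi x y : Icc lo hi x ->
  Rabs (clamp lo hi y - x) <= Rabs (y - x).
Proof.
  unfold Icc, clamp, Rmax, Rmin; intros.
  repeat destruct Rle_dec; unfold Rabs; repeat destruct Rcase_abs; lra.
Qed.

Lemma continuous_within_Icc_bounded lo hi f : lo <= hi ->
  (forall x, Icc lo hi x -> continuous_within (Icc lo hi) f x) ->
  bounded_on lo hi f.
Proof.
  intros Hlohi Hf.
  set (F := fun x => Rabs (f (clamp lo hi x))).
  assert (HF : forall x, lo <= x <= hi -> continuity_pt F x).
  { intros x Hx eps Heps.
    destruct (Hf x Hx eps Heps) as [delta [Hdelta Hclose]].
    exists delta; split; [exact Hdelta |].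
    intros y [_ Hy]; simpl in *; unfold R_dist in *; unfold F.
    rewrite (clamp_id _ _ _ Hx).
    eapply Rle_lt_trans; [apply Rabs_triang_inv2 |].
    apply Hclose; [apply clamp_Icc; exact Hlohi |].
    eapply Rle_lt_trans; [apply clamp_dist; exact Hx | exact Hy]. }
  destruct (continuity_ab_maj F lo hi Hlohi HF) as [xmax [Hmax _]].
  exists (F xmax); intros x Hx.
  specialize (Hmax x Hx); unfold F in Hmax; rewrite clamp_id in Hmax; auto.
Qed.

Lemma Rabs_le_geom_eq0 c M sigma : 0 <= sigma < 1 ->
  (forall n, Rabs c <= M * sigma ^ n) -> c = 0.
Proof.
  intros Hsigma Hc.
  assert (Hlim : is_lim_seq (fun n => M * sigma ^ n) 0).
  { replace (Finite 0) with (Rbar_mult M 0) by (simpl; f_equal; ring).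
    apply is_lim_seq_scal_l, is_lim_seq_geom; rewrite Rabs_pos_eq; lra. }
  pose proof (is_lim_seq_le _ _ _ _ Hc (is_lim_seq_const (Rabs c)) Hlim) as Hle.
  simpl in Hle; pose proof (Rabs_pos c).
  apply Rabs_eq_0; lra.
Qed.

Section ContractiveAffineEquation.

Variables (D : R -> Prop) (t d g : R -> R) (sigma G : R).
Hypothesis t_maps : forall x, D x -> D (t x).
Hypothesis d_ge0 : forall x, D x -> 0 <= d x.
Hypothesis d_le : forall x, D x -> d x <= sigma.
Hypothesis sigma_ge0 : 0 <= sigma.
Hypothesis sigma_lt1 : sigma < 1.
Hypothesis g_bound : forall x, D x -> Rabs (g x) <= G.

Let bounded (f : R -> R) := exists M, forall x, D x -> Rabs (f x) <= M.

Lemma iter_maps n x : D x -> D (Nat.iter n t x).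
Proof. induction n; simpl; auto. Qed.

Fixpoint orbit_weight (n : nat) (x : R) : R :=
  match n with O => 1 | S m => d x * orbit_weight m (t x) end.

Lemma orbit_weight_bound n x : D x -> 0 <= orbit_weight n x <= sigma ^ n.
Proof.
  revert x; induction n as [| n IH]; intros x Hx; simpl; [lra |].
  specialize (IH (t x) (t_maps x Hx)); pose proof (d_ge0 x Hx); pose proof (d_le x Hx).
  split; [nra | apply Rmult_le_compat; lra].
Qed.

Definition neumann_term (n : nat) (x : R) : R := g (Nat.iter n t x) * orbit_weight n x.

Lemma neumann_term_succ n x : neumann_term (S n) x = d x * neumann_term n (t x).
Proof. unfold neumann_term; rewrite Nat.iter_succ_r; simpl; ring. Qed.

Lemma neumann_term_bound n x : D x -> Rabs (neumann_term n x) <= G * sigma ^ n.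
Proof.
  intros Hx; unfold neumann_term; rewrite Rabs_mult.
  pose proof (orbit_weight_bound n x Hx) as Hw; rewrite (Rabs_pos_eq (orbit_weight n x)) by lra.
  apply Rmult_le_compat; try lra; [apply Rabs_pos | apply g_bound, iter_maps, Hx].
Qed.

Lemma is_series_geom_scal : is_series (fun n => G * sigma ^ n) (G / (1 - sigma)).
Proof.
  apply (is_series_scal_l G (fun n => sigma ^ n)), is_series_geom.
  rewrite Rabs_pos_eq; lra.
Qed.

Lemma ex_series_neumann_abs x : D x -> ex_series (fun n => Rabs (neumann_term n x)).
Proof.
  intros Hx; apply (ex_series_le (fun n => Rabs (neumann_term n x)) (fun n => G * sigma ^ n)).
  - intros n; rewrite Rabs_Rabsolu; apply neumann_term_bound, Hx.
  - eexists; apply is_series_geom_scal.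
Qed.

Lemma ex_series_neumann x : D x -> ex_series (fun n => neumann_term n x).
Proof. intros Hx; apply ex_series_Rabs, ex_series_neumann_abs, Hx. Qed.

Definition neumann_sum (x : R) : R := Series (fun n => neumann_term n x).

Lemma neumann_sum_bound x : D x -> Rabs (neumann_sum x) <= G / (1 - sigma).
Proof.
  intros Hx; eapply Rle_trans; [apply Series_Rabs, ex_series_neumann_abs, Hx |].
  rewrite <- (is_series_unique _ _ is_series_geom_scal).
  apply Series_le; [| eexists; apply is_series_geom_scal].
  intros n; split; [apply Rabs_pos | apply neumann_term_bound, Hx].
Qed.

Lemma neumann_sum_eq x : D x -> neumann_sum x = g x + d x * neumann_sum (t x).
Proof.
  intros Hx; unfold neumann_sum.
  rewrite Series_incr_1 by apply ex_series_neumann, Hx.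
  rewrite (Series_ext _ (fun n => d x * neumann_term n (t x)))
    by (intros n; apply neumann_term_succ).
  rewrite Series_scal_l; unfold neumann_term; simpl; ring.
Qed.

Lemma bounded_homogeneous_solution_eq0 r : bounded r ->
  (forall x, D x -> r x = r (t x) * d x) -> forall x, D x -> r x = 0.
Proof.
  intros [M HM] Hr x Hx; apply (Rabs_le_geom_eq0 (r x) M sigma); [lra |].
  intros n; revert x Hx; induction n as [| n IH]; intros x Hx.
  - rewrite pow_O, Rmult_1_r; apply HM, Hx.
  - rewrite (Hr x Hx), Rabs_mult, (Rabs_pos_eq (d x) (d_ge0 x Hx)).
    rewrite <- tech_pow_Rmult.
    replace (M * (sigma * sigma ^ n)) with (M * sigma ^ n * sigma) by ring.
    apply Rmult_le_compat; auto using Rabs_pos.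
Qed.

Theorem contractive_affine_equation_unique_solution :
  exists p : R -> R, bounded p /\
    (forall x, D x -> p x = p (t x) * d x - g x) /\
    (forall q : R -> R, bounded q -> (forall x, D x -> q x = q (t x) * d x - g x) ->
       forall x, D x -> q x = p x).
Proof.
  assert (Hp : forall x, D x -> - neumann_sum x = - neumann_sum (t x) * d x - g x).
  { intros x Hx; rewrite neumann_sum_eq by exact Hx; ring. }
  exists (fun x => - neumann_sum x); split; [| split; [exact Hp |]].
  - exists (G / (1 - sigma)); intros x Hx; rewrite Rabs_Ropp; apply neumann_sum_bound, Hx.
  - intros q [Mq HMq] Hq x Hx.
    enough (q x - - neumann_sum x = 0) by lra.
    apply (bounded_homogeneous_solution_eq0 (fun y => q y - - neumann_sum y)); [| | exact Hx].
    + exists (Mq + G / (1 - sigma)); intros y Hy.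
      eapply Rle_trans; [apply Rabs_triang |]; rewrite !Rabs_Ropp.
      pose proof (HMq y Hy); pose proof (neumann_sum_bound y Hy); lra.
    + intros y Hy; rewrite (Hq y Hy), (Hp y Hy); ring.
Qed.

End ContractiveAffineEquation.

Theorem proposition2
  (a : R) (tau1 tau2 tau21 dtau1 dtau2 dtau21 : R -> R) (ahat sigma : R)
  (ha : 0 < a < 1)
  (h1C1 : C1_on 0 a tau1 dtau1) (h2C1 : C1_on 0 a tau2 dtau2)
  (h1inc : strict_incr_on 0 a tau1) (h2inc : strict_incr_on 0 a tau2)
  (h1range : forall x, Icc 0 a x -> Icc 0 1 (tau1 x))
  (h2range : forall x, Icc 0 a x -> Icc 0 1 (tau2 x))
  (h10 : tau1 0 = 0) (h20 : tau2 0 = 0) (h1a : tau1 a = 1) (h2a : tau2 a = 1)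
  (h1le : forall x, Icc 0 a x -> tau1 x <= x / a)
  (h2ge : forall x, Icc 0 a x -> x / a <= tau2 x)
  (* tau21 = tau2^{-1} o tau1 on [0,a] *)
  (h21def : forall x, Icc 0 a x -> Icc 0 a (tau21 x) /\ tau2 (tau21 x) = tau1 x)
  (h21C1 : C1_on 0 a tau21 dtau21)
  (h21lt : forall x, 0 < x < a -> tau21 x < x)
  (hahat : 0 < ahat < a) (hsigma : sigma < 1)
  (hsig : forall x, Icc 0 ahat x -> dtau21 x <= sigma) :
  exists p : R -> R,
    bounded_on 0 ahat p /\
    (forall x, Icc 0 ahat x ->
       p x = p (tau21 x) * dtau21 x - (dtau21 x - a * dtau1 x)) /\
    (forall q : R -> R, bounded_on 0 ahat q ->
       (forall x, Icc 0 ahat x ->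
          q x = q (tau21 x) * dtau21 x - (dtau21 x - a * dtau1 x)) ->
       forall x, Icc 0 ahat x -> q x = p x).
Proof.
  assert (Ha0 : Icc 0 a 0) by (unfold Icc; lra).
  assert (Hahat0 : Icc 0 ahat 0) by (unfold Icc; lra).
  assert (Hsub : forall x, Icc 0 ahat x -> Icc 0 a x) by (unfold Icc; intros; lra).
  pose proof (strict_incr_on_of_comp _ _ _ _ _ h1inc h2inc h21def) as h21inc.
  assert (h210 : tau21 0 = 0).
  { destruct (h21def 0 Ha0) as [H0 E0].
    apply (strict_incr_on_inj _ _ _ _ _ h2inc H0 Ha0); congruence. }
  assert (Hd_ge0 : forall x, Icc 0 ahat x -> 0 <= dtau21 x).
  { intros x Hx; apply (has_derivative_within_strict_incr_ge0 0 a tau21 _ x); auto; [lra |].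
    apply (proj1 h21C1), Hsub, Hx. }
  destruct (continuous_within_Icc_bounded 0 a dtau1) as [M1 HM1]; [lra | apply h1C1 |].
  apply (contractive_affine_equation_unique_solution _ _ _ _ sigma (1 + a * M1)); auto.
  - apply (below_diagonal_maps_Icc a); auto; intros x Hx; apply h21def, Hx.
  - pose proof (Hd_ge0 0 Hahat0); pose proof (hsig 0 Hahat0); lra.
  - intros x Hx; pose proof (Hd_ge0 x Hx); pose proof (hsig x Hx).
    pose proof (HM1 x (Hsub x Hx)) as Hbound.
    eapply Rle_trans; [apply Rabs_triang |].
    rewrite Rabs_Ropp, Rabs_mult, (Rabs_pos_eq a), Rabs_pos_eq by lra.
    apply Rplus_le_compat; [lra | apply Rmult_le_compat_l; lra].
Qed.
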